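(* Let $\Gamma$ be a hyperbolic graph such that $\operatorname{rank}\mathcal{F}(\Gamma)=20$, and let $D\ge2$. Then the $2D$-polarized lattice $\mathcal{F}_h(\Gamma)$ can be geometric only if $2D=h_\Gamma^2$.
   Context: Graphs are finite, simple. $\mathbb{Z}\Gamma$ is the lattice freely generated by the vertices of $\Gamma$ with $v^2=-2$, $u\cdot v=1$ if $u,v$ adjacent, $0$ otherwise; $\mathcal{F}(\Gamma)=\mathbb{Z}\Gamma/\ker\mathbb{Z}\Gamma$, where $\ker L$ is the kernel of the form. $\mathcal{F}_h(\Gamma)=(\mathbb{Z}\Gamma\oplus\mathbb{Z}h)/\ker$, with $h^2=2D$ and $v\cdot h=1$ for all vertices $v$. $\Gamma$ is hyperbolic if $\mathbb{Z}\Gamma\otimes\mathbb{R}$ has positive inertia index $1$. The intrinsic polarization $h_\Gamma\in\mathbb{Z}\Gamma\otimes\mathbb{Q}$ satisfies $v\cdot h_\Gamma=1$ for all vertices; $h_\Gamma^2$ is well defined when it exists. A $2D$-polarized lattice $(S,h)$ (nondegenerate, hyperbolic, $h\in S$, $h^2=2D$) is admissible if it contains no vector $e$ with $e^2=-2$, $e\cdot h=0$, and no vector $e$ with $e^2=0$, $e\cdot h=2$; it is geometric if it is admissible and admits a primitive embedding into the $K3$ lattice $\mathbf{L}=\mathbf U^3\oplus\mathbf E_8(-1)^2$ (the unique even unimodular lattice of rank $22$ and signature $-16$). *)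

From HB Require Import structures.
From mathcomp Require Import all_boot all_order all_algebra.
From mathcomp Require Import Rstruct.
Notation R := Rdefinitions.R.
Set Implicit Arguments. Unset Strict Implicit. Unset Printing Implicit Defensive.
Import Order.TTheory GRing.Theory Num.Theory.
Local Open Scope ring_scope.

(* Lattices given by a (possibly degenerate) Gram matrix on a set of  *)
(* m generators: the lattice is Z^m / ker G, with the induced form.   *)
(* Every element of the lattice is represented by some x : 'cV_m, and  *)
(* all notions below only depend on classes modulo ker G.             *)

Definition bil (m : nat) (G : 'M[int]_m) (x y : 'cV[int]_m) : int :=
  (x^T *m G *m y) 0 0.

Definition posdef (k : nat) (A : 'M[R]_k) : Prop :=
  forall v : 'cV[R]_k, v != 0 -> 0 < (v^T *m A *m v) 0 0.

(* positive inertia index of G (on Z^m (x) R) equals 1: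
   1 is the maximal dimension of a subspace on which the form is
   positive definite. *)
Definition hyperbolic (m : nat) (G : 'M[int]_m) : Prop :=
  let GR := map_mx (fun z : int => z%:~R : R) G in
  (exists A : 'M[R]_(m, 1), posdef (A^T *m GR *m A)) /\
  (forall (k : nat) (A : 'M[R]_(m, k)), posdef (A^T *m GR *m A) -> (k <= 1)%N).

(* 2D-polarized lattice (S,h): S = Z^m/ker G (automatically nondegenerate),
   hyperbolic, h in S, h^2 = 2D *)
Definition polarized (m : nat) (G : 'M[int]_m) (h : 'cV[int]_m) (D : nat) : Prop :=
  hyperbolic G /\ bil G h h = (2 * D)%:Z.

Definition admissible (m : nat) (G : 'M[int]_m) (h : 'cV[int]_m) : Prop :=
  (forall e : 'cV[int]_m, ~ (bil G e e = -2 /\ bil G e h = 0)) /\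
  (forall e : 'cV[int]_m, ~ (bil G e e = 0 /\ bil G e h = 2)).

(* adjacency in the E8 Dynkin diagram on {0..7}: chain 0-1-2-3-4-5-6,
   node 7 attached to node 4 (arms of lengths 4,2,1 from node 4) *)
Definition e8adj (i j : nat) : bool :=
  [|| (i.+1 == j) && (j <= 6)%N, (j.+1 == i) && (i <= 6)%N,
      (i == 4%N) && (j == 7%N) | (i == 7%N) && (j == 4%N)].

(* indices 0..5 : three copies of U (pairs {0,1},{2,3},{4,5});
   indices 6..13 and 14..21 : two copies of E8(-1) *)
Definition k3_entry (i j : nat) : int :=
  if (i < 6)%N && (j < 6)%N then
    (if (i./2 == j./2) && (i != j) then 1 else 0)
  else if (6 <= i < 14)%N && (6 <= j < 14)%N then
    (if i == j then -2 else if e8adj (i - 6) (j - 6) then 1 else 0)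
  else if (14 <= i)%N && (14 <= j)%N then
    (if i == j then -2 else if e8adj (i - 14) (j - 14) then 1 else 0)
  else 0.

Definition K3 : 'M[int]_22 := \matrix_(i < 22, j < 22) k3_entry i j.

(* primitive embedding of Z^m/ker G into the K3 lattice: a Z-linear map
   M : Z^m -> L preserving the form, injective on Z^m/ker G, with
   saturated (primitive) image *)
Definition primitive_embedding_K3 (m : nat) (G : 'M[int]_m) : Prop :=
  exists M : 'M[int]_(22, m),
    [/\ M^T *m K3 *m M = G,
        (forall x : 'cV[int]_m, G *m x = 0 -> M *m x = 0) &
        (forall (y : 'cV[int]_22) (k : int) (x : 'cV[int]_m),
            k != 0 -> k *: y = M *m x -> exists x' : 'cV[int]_m, y = M *m x')].

Definition geometric (m : nat) (G : 'M[int]_m) (h : 'cV[int]_m) (D : nat) : Prop :=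
  [/\ polarized G h D, admissible G h & primitive_embedding_K3 G].

(* a finite simple graph on vertex set 'I_n: adj symmetric, irreflexive *)

Definition gram (n : nat) (adj : rel 'I_n) : 'M[int]_n :=
  \matrix_(i, j) (if i == j then -2 else if adj i j then 1 else 0).

(* rank of F(Gamma) = Z Gamma / ker = rank of the Gram matrix (over Q) *)
Definition rankF (n : nat) (adj : rel 'I_n) : nat :=
  \rank (map_mx (fun z : int => z%:~R : rat) (gram adj)).

Definition hyperbolic_graph (n : nat) (adj : rel 'I_n) : Prop :=
  hyperbolic (gram adj).

(* Gram matrix of Z Gamma (+) Z h, with h the last generator:
   h^2 = 2D, v.h = 1 for all vertices v *)
Definition gram_h (n : nat) (adj : rel 'I_n) (D : nat) : 'M[int]_(n + 1) :=
  block_mx (gram adj) (const_mx 1) (const_mx 1) (const_mx (2 * D)%:Z).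

Definition hvec (n : nat) : 'cV[int]_(n + 1) := col_mx 0 (const_mx 1).

(* intrinsic polarization: h_Gamma in Z Gamma (x) Q with v . h_Gamma = 1 *)
Definition gramQ (n : nat) (adj : rel 'I_n) : 'M[rat]_n :=
  map_mx (fun z : int => z%:~R : rat) (gram adj).

Definition is_intrinsic_pol (n : nat) (adj : rel 'I_n) (x : 'cV[rat]_n) : Prop :=
  gramQ adj *m x = const_mx 1.

Definition sqQ (n : nat) (adj : rel 'I_n) (x : 'cV[rat]_n) : rat :=
  (x^T *m gramQ adj *m x) 0 0.

(** The diagonals [e_i + f_i] of the three hyperbolic planes [U] span a
    positive definite 3-plane [P] of [L ⊗ R].  If a lattice of positive inertia
    index 1 maps isometrically into [L] with image of rank at least 21, the
    image meets [P] in a positive definite plane, which is impossible; so its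
    rank is at most 20.  Hence [F_h(Γ)] has the same rank as [F(Γ)], and the
    border row [(1, ..., 1 | 2D)] of its Gram matrix is a rational combination
    [y] of the rows [(G | 1)]: [y G = 1] and [y 1 = 2D].  Then [y^T] is an
    intrinsic polarization, and any [x] with [G x = 1] satisfies
    [x^T G x = 1^T x = y G x = y 1 = 2D]. *)

From mathcomp Require Import all_boot all_order all_algebra.
From mathcomp Require Import Rstruct.
From mathcomp Require Import zify.
Set Implicit Arguments. Unset Strict Implicit. Unset Printing Implicit Defensive.
Import Order.TTheory GRing.Theory Num.Theory.
Local Open Scope ring_scope.

Lemma rowmx_sqnorm_gt0 (F : realDomainType) p (c : 'rV[F]_p) :
  c != 0 -> 0 < (c *m c^T) 0 0.
Proof.
have sq_ge0 j : 0 <= c 0 j * c^T j 0 by rewrite mxE -expr2 sqr_ge0.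
apply: contraNT; rewrite -leNgt => c_le0.
have sum0 : (c *m c^T) 0 0 = 0 by apply/le_anti; rewrite c_le0 mxE sumr_ge0.
rewrite mxE in sum0.
apply/eqP/matrixP => i j; rewrite ord1 mxE.
have := psumr_eq0P (fun j _ => sq_ge0 j) sum0.
by move/(_ j isT); rewrite [c^T _ _]mxE -expr2 => /eqP; rewrite sqrf_eq0 => /eqP.
Qed.

Section PositiveSubspace.

Variables (F : realFieldType) (N p : nat) (K : 'M[F]_N) (W : 'M[F]_(p, N)).

Definition posdef_on : Prop :=
  forall u : 'rV[F]_N, (u <= W)%MS -> u != 0 -> 0 < (u *m K *m u^T) 0 0.

Variable a : F.
Hypotheses (a_gt0 : 0 < a) (WKW : W *m K *m W^T = a%:M).

Lemma scalar_gram_posdef_on : posdef_on.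
Proof.
move=> u uW u_neq0; set c := u *m pinvmx W.
have cW : c *m W = u by rewrite mulmxKpV.
have c_neq0 : c != 0 by apply: contraNneq u_neq0 => c0; rewrite -cW c0 mul0mx.
have -> : u *m K *m u^T = c *m (W *m K *m W^T) *m c^T.
  by rewrite -cW trmx_mul !mulmxA.
by rewrite WKW mul_mx_scalar -scalemxAl mxE mulr_gt0 ?rowmx_sqnorm_gt0.
Qed.

Lemma scalar_gram_rank : \rank W = p.
Proof.
apply/anti_leq; rewrite rank_leq_row /=.
have := mxrankM_maxl W (K *m W^T).
by rewrite mulmxA WKW -scalemx1 mxrank_scale_nz ?mxrank1 ?gt_eqF.
Qed.

End PositiveSubspace.

Definition pos_inertia_le1 (m : nat) (G : 'M[R]_m) : Prop :=
  forall (k : nat) (A : 'M[R]_(m, k)), posdef (A^T *m G *m A) -> (k <= 1)%N.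

Section PositiveSubspaceMeet.

Variables (N p m : nat) (K : 'M[R]_N) (W : 'M[R]_(p, N)) (V : 'M[R]_(m, N)).
Hypotheses (posW : posdef_on K W) (inertiaV : pos_inertia_le1 (V *m K *m V^T)).

Lemma posdef_on_cap_rank_le1 : (\rank (W :&: V) <= 1)%N.
Proof.
set B := row_base (W :&: V)%MS.
have BW : (B <= W)%MS by rewrite (submx_trans _ (capmxSl W V)) ?eq_row_base.
have BV : (B <= V)%MS by rewrite (submx_trans _ (capmxSr W V)) ?eq_row_base.
set X := B *m pinvmx V; have XV : X *m V = B by rewrite mulmxKpV.
apply: (@inertiaV _ X^T) => v v_neq0; rewrite trmxK.
have -> : v^T *m (X *m (V *m K *m V^T) *m X^T) *m v
          = (v^T *m B) *m K *m (v^T *m B)^T.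
  by rewrite -XV !trmx_mul trmxK !mulmxA.
apply: posW; first exact: submx_trans (submxMl _ _) BW.
by rewrite mulmx_free_eq0 ?row_base_free // trmx_eq0.
Qed.

Lemma posdef_on_rank_le : (\rank V + \rank W <= N + 1)%N.
Proof.
have := mxrank_sum_cap W V; have := rank_leq_col (W + V)%MS.
have := posdef_on_cap_rank_le1; lia.
Qed.

End PositiveSubspaceMeet.

Lemma mulmx_tr_entry (S : pzRingType) m p q (A : 'M[S]_(m, p)) (B : 'M_p)
    (C : 'M_(q, p)) i j :
  (A *m B *m C^T) i j = (row i A *m B *m (row j C)^T) 0 0.
Proof. by rewrite -row_mul !mxE; apply: eq_bigr => k _; rewrite !mxE. Qed.

Definition U3_diag : 'M[int]_(3, 22) :=
  \matrix_(i < 3) (delta_mx 0 (inord (2 * i)) + delta_mx 0 (inord (2 * i).+1)).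

Lemma U3_diag_gram : U3_diag *m K3 *m U3_diag^T = 2%:M.
Proof.
apply/matrixP => i j; rewrite mulmx_tr_entry !rowK.
rewrite raddfD /= !mulmxDl !mulmxDr ![((_ + _ : 'M_1) _ _)]mxE.
rewrite !trmx_delta -!rowE -!colE !mxE.
by case: i => [[|[|[|//]]] ?]; case: j => [[|[|[|//]]] ?]; rewrite /= !inordK.
Qed.

Local Notation intR := (fun z : int => z%:~R : R).
Local Notation intQ := (fun z : int => z%:~R : rat).

Lemma hyperbolic_K3_rank_le20 m (M : 'M[int]_(22, m)) :
  hyperbolic (M^T *m K3 *m M) -> (\rank (map_mx intR M) <= 20)%N.
Proof.
case=> _ inertia.
set V := (map_mx intR M)^T; set KR := map_mx intR K3.
set W := map_mx intR U3_diag.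
have WKW : W *m KR *m W^T = 2%:M.
  by rewrite map_trmx -!map_mxM U3_diag_gram map_scalar_mx.
have posW : posdef_on KR W := scalar_gram_posdef_on (ltr0Sn _ 1) WKW.
have inertiaV : pos_inertia_le1 (V *m KR *m V^T).
  by rewrite /V trmxK map_trmx -!map_mxM.
have := posdef_on_rank_le posW inertiaV.
by rewrite /V mxrank_tr (scalar_gram_rank (ltr0Sn _ 1) WKW); lia.
Qed.

Lemma rank_map_intQ_intR m n (A : 'M[int]_(m, n)) :
  \rank (map_mx intQ A) = \rank (map_mx intR A).
Proof.
rewrite -(mxrank_map (ratr : {rmorphism rat -> R})) -map_mx_comp.
by apply: congr1; apply: eq_map_mx => z /=; rewrite ratr_int.
Qed.

Lemma geometric_rank_le20 m (G : 'M[int]_m) (h : 'cV[int]_m) (D : nat) :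
  geometric G h D -> (\rank (map_mx intQ G) <= 20)%N.
Proof.
case=> [[hypG _] _ [M [MKM _ _]]].
rewrite rank_map_intQ_intR -MKM !map_mxM.
apply: leq_trans (mxrankM_maxr _ _) _.
by apply: hyperbolic_K3_rank_le20; rewrite MKM.
Qed.

Section BorderedMatrix.

Variables (F : fieldType) (n : nat) (G : 'M[F]_n) (c : 'cV[F]_n).

Lemma bordered_rank_le (r : 'rV[F]_n) (d : 'M[F]_1) :
  (\rank (block_mx G c r d) <= \rank G)%N ->
  exists2 y : 'rV[F]_n, y *m G = r & y *m c = d.
Proof.
rewrite block_mxEv => rank_le.
have [top_sub bot_sub] : (row_mx G c <= col_mx (row_mx G c) (row_mx r d))%MS
                /\ (row_mx r d <= col_mx (row_mx G c) (row_mx r d))%MS.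
  by apply/andP; rewrite -col_mx_sub.
have rank_top : (\rank G <= \rank (row_mx G c))%N.
  have G_top : G = row_mx G c *m col_mx 1%:M 0.
    by rewrite mul_row_col mulmx1 mulmx0 addr0.
  by rewrite {1}G_top mxrankM_maxl.
have sub_top : (col_mx (row_mx G c) (row_mx r d) <= row_mx G c)%MS.
  by rewrite -(mxrank_leqif_sup top_sub).2; have := mxrankS top_sub; lia.
have /submxP[y] := submx_trans bot_sub sub_top.
by rewrite mul_mx_row => /eq_row_mx[-> ->]; exists y.
Qed.

Lemma bordered_solution_form (d : 'M[F]_1) (y : 'rV[F]_n) (x : 'cV[F]_n) :
  y *m G = c^T -> y *m c = d -> G *m x = c -> x^T *m G *m x = d.
Proof.
move=> yG yc Gx; rewrite -mulmxA Gx -[LHS]trmxK trmx_mul trmxK.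
by rewrite -yG -mulmxA Gx yc [d]mx11_scalar tr_scalar_mx.
Qed.

End BorderedMatrix.

Lemma gramQ_tr (n : nat) (adj : rel 'I_n) :
  symmetric adj -> (gramQ adj)^T = gramQ adj.
Proof. by move=> adj_sym; apply/matrixP => i j; rewrite !mxE eq_sym adj_sym. Qed.

Lemma map_gram_h (n : nat) (adj : rel 'I_n) (D : nat) :
  map_mx intQ (gram_h adj D)
  = block_mx (gramQ adj) (const_mx 1) (const_mx 1) (const_mx (2 * D)%:R).
Proof. by rewrite map_block_mx !map_const_mx. Qed.

Theorem corollary2p9 (n : nat) (adj : rel 'I_n)
    (adj_sym : symmetric adj) (adj_irr : irreflexive adj) (D : nat) :
  hyperbolic_graph adj ->
  rankF adj = 20%N ->
  (2 <= D)%N ->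
  geometric (gram_h adj D) (hvec n) D ->
  (exists hG : 'cV[rat]_n, is_intrinsic_pol adj hG) /\
  (forall hG : 'cV[rat]_n, is_intrinsic_pol adj hG -> sqQ adj hG = (2 * D)%:R).
Proof.
move=> _ rankG _ geo.
have rank_le : (\rank (map_mx intQ (gram_h adj D)) <= \rank (gramQ adj))%N.
  by rewrite [\rank (gramQ _)]rankG; exact: geometric_rank_le20 geo.
rewrite map_gram_h in rank_le; have [y yG y1] := bordered_rank_le rank_le.
have yG_tr : y *m gramQ adj = (const_mx 1)^T by rewrite yG trmx_const.
split.
  exists y^T.
  by rewrite /is_intrinsic_pol -(gramQ_tr adj_sym) -trmx_mul yG trmx_const.
move=> hG hG_pol.
by rewrite /sqQ (bordered_solution_form yG_tr y1 hG_pol) mxE.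
Qed.
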